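(* Let $W$ be an sc-Banach space and let $g:\mathcal O(([0,\infty)^k\oplus\mathbb R^{n-k})\oplus W,0)\to\mathbb R^N\oplus W$ be an sc-smooth germ such that, with $P:\mathbb R^N\oplus W\to W$ the canonical projection, the germ $P\circ(g-g(0,0)):\mathcal O(([0,\infty)^k\oplus\mathbb R^{n-k})\oplus W,0)\to W$ is an $\mathrm{sc}^0$-contraction germ. Then $g$ is linearized Fredholm at $0$ and its Fredholm index is $\operatorname{Ind}(g,0)=n-N$.
   Context: An sc-Banach space is a Banach space $E$ with a nested sequence of Banach spaces $E=E_0\supset E_1\supset\cdots$, the inclusions $E_n\to E_m$ ($m<n$) compact and $E_\infty=\bigcap E_m$ dense in each $E_m$; finite-dimensional spaces carry the constant structure, direct sums the levelwise one; $F^1$ denotes $F_1$ with levels $(F^1)_m=F_{m+1}$. A germ of neighborhoods $\mathcal O(C,0)$ is a decreasing sequence $U_0\supset U_1\supset\cdots$ with $U_m$ relatively open neighborhood of $0$ in $C\cap E_m$. An $\mathrm{sc}^0$-germ $g:\mathcal O(C,0)\to F$ is a continuous $g:U_0\to F_0$ with $g(U_m)\subset F_m$ and $g:U_m\to F_m$ continuous for all $m$ (an ''$\mathrm{sc}^0$-germ into $(F,0)$'' additionally has $g(0)=0$). It is $\mathrm{sc}^1$ if for $x\in U_1$ there is $Dg(x)\in\mathcal L(E_0,F_0)$ with $\|g(x+h)-g(x)-Dg(x)h\|_0/\|h\|_1\to0$ as $\|h\|_1\to0$ and $Tg(x,h)=(g(x),Dg(x)h)$ maps $U_{m+1}\oplus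 E_m$ into $F_{m+1}\oplus F_m$ and is an $\mathrm{sc}^0$-germ; $\mathrm{sc}^k$ inductively ($Tg$ of class $\mathrm{sc}^{k-1}$); sc-smooth means $\mathrm{sc}^k$ for all $k$ (then $g(0)\in F_\infty$). An $\mathrm{sc}^+$-germ is an $\mathrm{sc}$-smooth germ $s$ with $s(U_m)\subset F_{m+1}$ which is sc-smooth as a germ into $F^1$. An sc-operator is a bounded linear $T:E\to F$ mapping $E_m$ continuously into $F_m$ for all $m$. It is sc-Fredholm if there are levelwise topological splittings $E=K\oplus X$, $F=Y\oplus C$ into closed subspaces compatible with all levels such that $K=\ker T$ and $C$ are finite-dimensional, $Y=T(X)$ and $T:X\to Y$ is an sc-isomorphism; its index is $\dim K-\dim C$. The germ $g$ is linearized Fredholm at $0$ if for an $\mathrm{sc}^+$-germ $s$ with $s(0)=g(0)$ the linearization $D(g-s)(0)$ is an sc-Fredholm operator; its index $\operatorname{Ind}(g,0)$ is the Fredholm index of $D(g-s)(0)$ (this does not depend on the choice of $s$). An $\mathrm{sc}^0$-contraction germ is an $\mathrm{sc}^0$-germ $f:\mathcal O(V\oplus W,0)\to(W,0)$, $V$ a finite-dimensional partial quadrant, of the form $f(v,w)=w-B(v,w)$ with: for every $m$ and $0<\varepsilon<1$, $\|B(v,w)-B(v,w')\|_m\le\varepsilon\|w-w'\|_m$ for $(v,w),(v,w')$ sufficiently close to $(0,0)$ in $V\oplus W_m$. *)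

From mathcomp Require Import all_boot all_order all_algebra reals Rstruct.
Set Implicit Arguments. Unset Strict Implicit. Unset Printing Implicit Defensive.
Import Order.TTheory GRing.Theory Num.Theory.
Local Open Scope ring_scope.

Notation R := Rdefinitions.R.

Record scSpace (V : lmodType R) := ScSpace {
  lvl : nat -> V -> Prop;
  nrm : nat -> V -> R }.

Section ScDefs.
Variables (V V' : lmodType R).

Definition is_subspace (A : V -> Prop) : Prop :=
  A 0 /\ (forall a x y, A x -> A y -> A (a *: x + y)).

Definition is_norm_on (A : V -> Prop) (N : V -> R) : Prop :=
  (forall x, A x -> 0 <= N x) /\
  (forall x, A x -> N x = 0 -> x = 0) /\
  (forall a x, A x -> N (a *: x) = `|a| * N x) /\
  (forall x y, A x -> A y -> N (x + y) <= N x + N y).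

Definition cauchy_in (N : V -> R) (u : nat -> V) : Prop :=
  forall e : R, 0 < e -> exists i0, forall i j, (i0 <= i)%N -> (i0 <= j)%N ->
    N (u i - u j) < e.

Definition converges_to (N : V -> R) (u : nat -> V) (x : V) : Prop :=
  forall e : R, 0 < e -> exists i0, forall i, (i0 <= i)%N -> N (u i - x) < e.

Definition is_scBanach (E : scSpace V) : Prop :=
  (forall m, is_subspace (lvl E m)) /\
  (forall m, is_norm_on (lvl E m) (nrm E m)) /\
  (forall m x, lvl E m.+1 x -> lvl E m x) /\
  (forall m (u : nat -> V), (forall i, lvl E m (u i)) -> cauchy_in (nrm E m) u ->
     exists x, lvl E m x /\ converges_to (nrm E m) u x) /\
  (forall m n, (m < n)%N -> forall u : nat -> V,
     (forall i, lvl E n (u i) /\ nrm E n (u i) <= 1) ->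
     exists (phi : nat -> nat) (x : V),
       (forall i, (phi i < phi i.+1)%N) /\ lvl E m x /\
       converges_to (nrm E m) (u \o phi) x) /\
  (forall m x, lvl E m x -> forall e : R, 0 < e ->
     exists y, (forall j, lvl E j y) /\ nrm E m (x - y) < e).

Definition closed_in (E : scSpace V) (m : nat) (A : V -> Prop) : Prop :=
  forall (u : nat -> V) x, (forall i, A (u i)) -> lvl E m x ->
    converges_to (nrm E m) u x -> A x.

Definition has_dim (A : V -> Prop) (d : nat) : Prop :=
  exists b : 'I_d -> V,
    (forall x, A x <-> exists c : 'I_d -> R, x = \sum_(i < d) c i *: b i) /\
    (forall c : 'I_d -> R, \sum_(i < d) c i *: b i = 0 -> forall i, c i = 0).

Definition is_germ_nbhd (E : scSpace V) (C : V -> Prop) (U : nat -> V -> Prop)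
  : Prop :=
  (forall m x, U m.+1 x -> U m x) /\
  (forall m x, U m x -> C x /\ lvl E m x) /\
  (forall m, U m 0) /\
  (forall m x, U m x -> exists d : R, 0 < d /\
     forall y, C y -> lvl E m y -> nrm E m (y - x) < d -> U m y).

Definition sc0 (E : scSpace V) (F : scSpace V') (U : nat -> V -> Prop)
  (g : V -> V') : Prop :=
  (forall m x, U m x -> lvl F m (g x)) /\
  (forall m x, U m x -> forall e : R, 0 < e -> exists d : R, 0 < d /\
     forall y, U m y -> nrm E m (y - x) < d -> nrm F m (g y - g x) < e).

Definition bounded_linear0 (E : scSpace V) (F : scSpace V') (L : V -> V') : Prop :=
  (forall x, lvl E 0 x -> lvl F 0 (L x)) /\
  (forall a x y, lvl E 0 x -> lvl E 0 y -> L (a *: x + y) = a *: L x + L y) /\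
  (exists c : R, forall x, lvl E 0 x -> nrm F 0 (L x) <= c * nrm E 0 x).

Definition is_scderiv (E : scSpace V) (F : scSpace V') (U : nat -> V -> Prop)
  (g : V -> V') (x : V) (L : V -> V') : Prop :=
  bounded_linear0 E F L /\
  forall e : R, 0 < e -> exists d : R, 0 < d /\
    forall h, lvl E 1 h -> U 1 (x + h) -> nrm E 1 h < d ->
      nrm F 0 (g (x + h) - g x - L h) <= e * nrm E 1 h.

Definition sc_operator (E : scSpace V) (F : scSpace V') (T : V -> V') : Prop :=
  (forall a x y, lvl E 0 x -> lvl E 0 y -> T (a *: x + y) = a *: T x + T y) /\
  (forall m x, lvl E m x -> lvl F m (T x)) /\
  (forall m, exists c : R, forall x, lvl E m x -> nrm F m (T x) <= c * nrm E m x).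

End ScDefs.

Definition sc_splitting (V : lmodType R) (E : scSpace V) (A B : V -> Prop) : Prop :=
  is_subspace A /\ is_subspace B /\
  (forall x, A x -> lvl E 0 x) /\ (forall x, B x -> lvl E 0 x) /\
  closed_in E 0 A /\ closed_in E 0 B /\
  (forall x, A x -> B x -> x = 0) /\
  (forall m x, lvl E m x -> exists a b, A a /\ B b /\ lvl E m a /\ lvl E m b /\
     x = a + b) /\
  (forall m, exists c : R, forall a b, A a -> B b -> lvl E m a -> lvl E m b ->
     nrm E m a <= c * nrm E m (a + b)).

Definition sc_fredholm (V V' : lmodType R) (E : scSpace V) (F : scSpace V')
  (T : V -> V') (dK dC : nat) : Prop :=
  sc_operator E F T /\
  exists (K X : V -> Prop) (Y Cc : V' -> Prop),
    (forall x, K x <-> lvl E 0 x /\ T x = 0) /\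
    has_dim K dK /\ has_dim Cc dC /\
    sc_splitting E K X /\ sc_splitting F Y Cc /\
    (forall y, Y y <-> exists x, X x /\ y = T x) /\
    (forall x x', X x -> X x' -> T x = T x' -> x = x') /\
    (forall m y, Y y -> lvl F m y -> exists x, X x /\ lvl E m x /\ T x = y) /\
    (forall m, exists c : R, forall x, X x -> lvl E m x ->
       nrm E m x <= c * nrm F m (T x)).

Definition sc_shift (V : lmodType R) (E : scSpace V) : scSpace V :=
  ScSpace (fun m => lvl E m.+1) (fun m => nrm E m.+1).

Definition sc_sum (V W : lmodType R) (E : scSpace V) (F : scSpace W)
  : scSpace (V * W)%type :=
  ScSpace (fun m p => lvl E m p.1 /\ lvl F m p.2)
          (fun m p => nrm E m p.1 + nrm F m p.2).

Definition sc_fin (n : nat) : scSpace 'rV[R]_n :=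
  @ScSpace _ (fun _ _ => True) (fun _ (v : 'rV[R]_n) => \sum_(i < n) `|v ord0 i|).

Definition tan_space (V : lmodType R) (E : scSpace V) : scSpace (V * V)%type :=
  sc_sum (sc_shift E) E.
Definition tan_germ (V : lmodType R) (E : scSpace V) (U : nat -> V -> Prop)
  : nat -> (V * V)%type -> Prop :=
  fun m p => U m.+1 p.1 /\ lvl E m p.2.
Definition tan_map (V V' : lmodType R) (g : V -> V') (L : V -> V -> V')
  : (V * V)%type -> (V' * V')%type :=
  fun p => (g p.1, L p.1 p.2).

Fixpoint scK (k : nat) : forall (V V' : lmodType R), scSpace V -> scSpace V' ->
    (nat -> V -> Prop) -> (V -> V') -> Prop :=
  match k with
  | 0 => fun V V' E F U g => sc0 E F U g
  | k'.+1 => fun V V' E F U g =>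
      sc0 E F U g /\
      exists L : V -> V -> V',
        (forall x, U 1%N x -> is_scderiv E F U g x (L x)) /\
        scK k' (tan_space E) (tan_space F) (tan_germ E U) (tan_map g L)
  end.

Definition sc_smooth (V V' : lmodType R) (E : scSpace V) (F : scSpace V')
  (U : nat -> V -> Prop) (g : V -> V') : Prop :=
  forall k, scK k E F U g.

Definition sc_plus (V V' : lmodType R) (E : scSpace V) (F : scSpace V')
  (U : nat -> V -> Prop) (s : V -> V') : Prop :=
  sc_smooth E F U s /\ (forall m x, U m x -> lvl F m.+1 (s x)) /\
  sc_smooth E (sc_shift F) U s.

Definition quadrant (k n : nat) : 'rV[R]_n -> Prop :=
  fun v => forall i : 'I_n, (i < k)%N -> 0 <= v ord0 i.

Definition sc0_contraction (n : nat) (W : lmodType R) (EW : scSpace W)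
  (U : nat -> ('rV[R]_n * W)%type -> Prop) (f : ('rV[R]_n * W)%type -> W) : Prop :=
  sc0 (sc_sum (sc_fin n) EW) EW U f /\ f 0 = 0 /\
  let B := fun p : ('rV[R]_n * W)%type => p.2 - f p in
  forall m (e : R), 0 < e < 1 -> exists d : R, 0 < d /\
    forall v w w', U m (v, w) -> U m (v, w') ->
      nrm (sc_fin n) 0 v < d -> nrm EW m w < d -> nrm EW m w' < d ->
      nrm EW m (B (v, w) - B (v, w')) <= e * nrm EW m (w - w').

Definition lin_fredholm_index (V V' : lmodType R) (E : scSpace V) (F : scSpace V')
  (C : V -> Prop) (U : nat -> V -> Prop) (g : V -> V') (i : int) : Prop :=
  exists (Us : nat -> V -> Prop) (s : V -> V'),
    is_germ_nbhd E C Us /\ sc_plus E F Us s /\ s 0 = g 0 /\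
    let U' := fun m x => U m x /\ Us m x in
    (exists L, is_scderiv E F U' (fun x => g x - s x) 0 L) /\
    (forall L, is_scderiv E F U' (fun x => g x - s x) 0 L ->
       exists dK dC : nat, sc_fredholm E F L dK dC /\ (dK%:Z - dC%:Z = i)).

From mathcomp Require Import all_boot all_order all_algebra reals Rstruct.
From mathcomp Require Import ring lra.
Import Order.TTheory GRing.Theory Num.Theory.
Set Implicit Arguments. Unset Strict Implicit. Unset Printing Implicit Defensive.
Local Open Scope ring_scope.

(* Let D := Dg(0), an sc-operator since g is sc^1. Along small multiples of
   (0, w) with w in W_1, the contraction estimate for (g - g 0).2 and the
   derivative estimate for g together force (D (0, w)).2 = w; by density of
   W_1 this holds on W. Hence D = T + (0 ⊕ id_W), where
   T x = D (x.1, 0) + ((D (0, x.2)).1, 0) maps every E_m boundedly into every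
   F_j, so s := g 0 + T is an sc^+-germ with s 0 = g 0 and D(g - s)(0) is the
   map (v, w) |-> (0, w). Derivatives at 0 along the partial quadrant are
   unique (a quadrant spans R^n, and E_1 is dense in E_0), so every
   linearization of g - s is this map: it is sc-Fredholm with kernel
   R^n ⊕ 0 and cokernel R^N ⊕ 0, of index n - N. *)

Lemma le0_of_small (X K : R) : (forall d, 0 < d < 1 -> X <= K * d) -> X <= 0.
Proof.
move=> small; rewrite leNgt; apply/negP => X_gt0.
have K1_gt0 : 0 < 2 * (`|K| + 1) by have := normr_ge0 K; lra.
pose d := Order.min (2^-1) (X / (2 * (`|K| + 1))).
have d_gt0 : 0 < d by rewrite lt_min invr_gt0 ltr0n divr_gt0.
have d_le : d <= X / (2 * (`|K| + 1)) by rewrite ge_min lexx orbT.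
have d_lt1 : d < 1 by rewrite gt_min invf_lt1 ?ltr1n.
have dK : d * (2 * (`|K| + 1)) <= X by rewrite -ler_pdivlMr.
have := small d; rewrite d_gt0 d_lt1 => /(_ isT).
have := ler_norm K; have := normr_ge0 K; move: dK d_gt0; set B := `|K|; nra.
Qed.

Lemma bounded_small (b e : R) : 0 < e ->
  exists2 d : R, 0 < d & forall x, 0 <= x -> x < d -> b * x < e.
Proof.
move=> e_gt0; have b1_gt0 : 0 < `|b| + 1 by rewrite ltr_wpDl.
exists (e / (`|b| + 1)) => [|x x_ge0]; first exact: divr_gt0.
rewrite ltr_pdivlMr // => xb; have := ler_norm b.
move: xb; set B := `|b|; nra.
Qed.

Lemma small_scale (d1 d2 a : R) : 0 < d1 -> 0 < d2 -> 0 <= a ->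
  exists t : R, [/\ 0 < t, t < d1 & t * a < d2].
Proof.
move=> d1_gt0 d2_gt0 a_ge0; have a1_gt0 : 0 < a + 1 by lra.
have da_gt0 : 0 < d2 / (a + 1) by rewrite divr_gt0.
pose t := Order.min d1 (d2 / (a + 1)) / 2.
have t_gt0 : 0 < t by rewrite divr_gt0 // lt_min d1_gt0.
have [t_d1 t_da] : t <= d1 / 2 /\ t <= d2 / (a + 1) / 2.
  by rewrite !ler_pM2r ?invr_gt0 // ge_min lexx ge_min lexx orbT.
exists t; split=> //; first lra.
have : t * (a + 1) < d2 by rewrite -ltr_pdivlMr //; lra.
nra.
Qed.

Lemma ler_add_bound (c1 c2 x1 x2 y1 y2 : R) : 0 <= x1 -> 0 <= x2 ->
  y1 <= c1 * x1 -> y2 <= c2 * x2 -> y1 + y2 <= (`|c1| + `|c2|) * (x1 + x2).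
Proof.
have := ler_norm c1; have := ler_norm c2; have := normr_ge0 c1; have := normr_ge0 c2.
set B1 := `|c1|; set B2 := `|c2|; nra.
Qed.

Definition sc_normed (V : lmodType R) (E : scSpace V) : Prop :=
  [/\ forall m, is_subspace (lvl E m), forall m, is_norm_on (lvl E m) (nrm E m)
    & forall m x, lvl E m.+1 x -> lvl E m x].

Definition lvl1_dense (V : lmodType R) (E : scSpace V) : Prop :=
  forall x, lvl E 0 x -> forall e : R, 0 < e ->
    exists y, lvl E 1 y /\ nrm E 0 (x - y) < e.

Definition linear_lvl0 (V V' : lmodType R) (E : scSpace V) (T : V -> V') : Prop :=
  forall a x y, lvl E 0 x -> lvl E 0 y -> T (a *: x + y) = a *: T x + T y.

Lemma scBanach_normed (V : lmodType R) (E : scSpace V) :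
  is_scBanach E -> sc_normed E.
Proof. by case=> sub [norm [nest _]]. Qed.

Lemma scBanach_lvl1_dense (V : lmodType R) (E : scSpace V) :
  is_scBanach E -> lvl1_dense E.
Proof.
case=> _ [_ [_ [_ [_ dense]]]] x x0 e e_gt0.
by have [y [y_oo xy]] := dense 0%N x x0 e e_gt0; exists y.
Qed.

Section ScNormed.
Variables (V : lmodType R) (E : scSpace V).
Hypothesis hE : sc_normed E.

Lemma lvl0 m : lvl E m 0.
Proof. by case: hE => sub _ _; case: (sub m). Qed.

Lemma lvlZD m a x y : lvl E m x -> lvl E m y -> lvl E m (a *: x + y).
Proof. by case: hE => sub _ _; case: (sub m) => _; apply. Qed.

Lemma lvlD m x y : lvl E m x -> lvl E m y -> lvl E m (x + y).
Proof. by move=> hx hy; rewrite -[x]scale1r; apply: lvlZD. Qed.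

Lemma lvlZ m a x : lvl E m x -> lvl E m (a *: x).
Proof. by move=> hx; rewrite -[_ *: _]addr0; apply: lvlZD => //; apply: lvl0. Qed.

Lemma lvlN m x : lvl E m x -> lvl E m (- x).
Proof. by rewrite -scaleN1r; apply: lvlZ. Qed.

Lemma lvlB m x y : lvl E m x -> lvl E m y -> lvl E m (x - y).
Proof. by move=> hx hy; apply: lvlD => //; apply: lvlN. Qed.

Lemma lvlS m x : lvl E m.+1 x -> lvl E m x.
Proof. by case: hE => _ _; apply. Qed.

Lemma lvlW m x : lvl E m x -> lvl E 0 x.
Proof. by elim: m => // m IH /lvlS. Qed.

Lemma nrm_ge0 m x : lvl E m x -> 0 <= nrm E m x.
Proof. by case: hE => _ norm _; case: (norm m) => ge0 _; apply: ge0. Qed.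

Lemma nrmZ m a x : lvl E m x -> nrm E m (a *: x) = `|a| * nrm E m x.
Proof. by case: hE => _ norm _; case: (norm m) => _ [_ [Z _]]; apply: Z. Qed.

Lemma nrmD m x y : lvl E m x -> lvl E m y -> nrm E m (x + y) <= nrm E m x + nrm E m y.
Proof. by case: hE => _ norm _; case: (norm m) => _ [_ [_ D]]; apply: D. Qed.

Lemma nrm0 m : nrm E m 0 = 0.
Proof. by rewrite -(scale0r (0 : V)) nrmZ ?normr0 ?mul0r //; apply: lvl0. Qed.

Lemma nrmN m x : lvl E m x -> nrm E m (- x) = nrm E m x.
Proof. by move=> hx; rewrite -scaleN1r nrmZ // normrN normr1 mul1r. Qed.

Lemma nrm_le0 m x : lvl E m x -> nrm E m x <= 0 -> x = 0.
Proof.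
move=> hx le0; case: hE => _ norm _; case: (norm m) => _ [eq0 _]; apply: eq0 => //.
by apply/le_anti; rewrite le0 nrm_ge0.
Qed.

Lemma linear_lvl0_0 (V' : lmodType R) (T : V -> V') : linear_lvl0 E T -> T 0 = 0.
Proof.
move=> lin; have := lin 1 0 0 (lvl0 0) (lvl0 0).
by rewrite !scale1r !addr0 => h; apply: (addrI (T 0)); rewrite addr0 -h.
Qed.

Lemma linear_lvl0Z (V' : lmodType R) (T : V -> V') a x :
  linear_lvl0 E T -> lvl E 0 x -> T (a *: x) = a *: T x.
Proof.
by move=> lin hx; have := lin a x 0 hx (lvl0 0); rewrite !addr0 linear_lvl0_0 // addr0.
Qed.

End ScNormed.

Lemma linear_lvl0D (V V' : lmodType R) (E : scSpace V) (T : V -> V') x y :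
  linear_lvl0 E T -> lvl E 0 x -> lvl E 0 y -> T (x + y) = T x + T y.
Proof. by move=> lin hx hy; have := lin 1 x y hx hy; rewrite !scale1r. Qed.

Lemma linear_lvl0B (V V' : lmodType R) (E : scSpace V) (T : V -> V') x y :
  linear_lvl0 E T -> lvl E 0 x -> lvl E 0 y -> T (x - y) = T x - T y.
Proof.
move=> lin hx hy; have -> : x - y = (-1) *: y + x by rewrite scaleN1r addrC.
by rewrite lin // scaleN1r addrC.
Qed.

Lemma sc_normed_fin p : sc_normed (sc_fin p).
Proof.
split=> // m; split=> /=.
- by move=> v _; apply: sumr_ge0.
split.
  move=> v _ v0; apply/rowP => i; rewrite mxE; apply/normr0_eq0.
  exact: (psumr_eq0P (fun i _ => normr_ge0 (v ord0 i)) v0).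
split.
  by move=> a v _; rewrite mulr_sumr; apply: eq_bigr => i _; rewrite mxE normrM.
move=> v w _ _; rewrite -big_split; apply: ler_sum => i _; rewrite mxE.
exact: ler_normD.
Qed.

Lemma sc_normed_sum (V W : lmodType R) (E : scSpace V) (F : scSpace W) :
  sc_normed E -> sc_normed F -> sc_normed (sc_sum E F).
Proof.
move=> hE hF; split=> m.
- split=> [|a x y [hx1 hx2] [hy1 hy2]]; first by split; apply: lvl0.
  change (lvl E m (a *: x.1 + y.1) /\ lvl F m (a *: x.2 + y.2)).
  by split; apply: lvlZD.
- split=> [x [? ?]|]; first by apply: addr_ge0; apply: nrm_ge0.
  split=> [[x y] [hx hy] /= xy0|].
    have ge0x := nrm_ge0 hE hx; have ge0y := nrm_ge0 hF hy.
    have x0 : nrm E m x <= 0 by lra.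
    have y0 : nrm F m y <= 0 by lra.
    by move: (nrm_le0 hE hx x0) (nrm_le0 hF hy y0) => /= -> ->.
  split=> [a x [hx hy]|x y [hx1 hx2] [hy1 hy2]].
    change (nrm E m (a *: x.1) + nrm F m (a *: x.2)
      = `|a| * (nrm E m x.1 + nrm F m x.2)).
    by rewrite (nrmZ hE) // (nrmZ hF) // mulrDr.
  change (nrm E m (x.1 + y.1) + nrm F m (x.2 + y.2)
    <= nrm E m x.1 + nrm F m x.2 + (nrm E m y.1 + nrm F m y.2)).
  by rewrite addrACA; apply: lerD; apply: nrmD.
- by move=> x [? ?]; split; apply: lvlS.
Qed.

Lemma sc_normed_shift (V : lmodType R) (E : scSpace V) :
  sc_normed E -> sc_normed (sc_shift E).
Proof. by case=> sub norm nest; split=> m; [apply: sub|apply: norm|apply: nest]. Qed.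

Lemma sc_normed_tan (V : lmodType R) (E : scSpace V) :
  sc_normed E -> sc_normed (tan_space E).
Proof. by move=> hE; apply: sc_normed_sum => //; apply: sc_normed_shift. Qed.

(** * Linear and affine sc-maps *)

Section ScOperator.
Variables (V V' : lmodType R) (E : scSpace V) (F : scSpace V').
Hypotheses (hE : sc_normed E) (hF : sc_normed F).
Variable T : V -> V'.
Hypothesis hT : sc_operator E F T.

Lemma sc_operator_bounded_linear0 : bounded_linear0 E F T.
Proof. by case: hT => lin [lv bnd]; split; [apply: lv|split=> //; apply: bnd]. Qed.

Lemma sc_operator_tan :
  sc_operator (tan_space E) (tan_space F) (fun p => (T p.1, T p.2)).
Proof.
case: hT => lin [lv bnd]; split; last split.
- move=> a x y [x1 x2] [y1 y2].
  have x10 := lvlW hE x1; have y10 := lvlW hE y1.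
  change ((T (a *: x.1 + y.1), T (a *: x.2 + y.2))
    = (a *: T x.1 + T y.1, a *: T x.2 + T y.2)).
  by rewrite !lin.
- by move=> m x [x1 x2]; split; apply: lv.
move=> m; have [c1 bnd1] := bnd m.+1; have [c2 bnd2] := bnd m.
exists (`|c1| + `|c2|) => x [x1 x2].
change (nrm F m.+1 (T x.1) + nrm F m (T x.2)
  <= (`|c1| + `|c2|) * (nrm E m.+1 x.1 + nrm E m x.2)).
by apply: ler_add_bound; [apply: (nrm_ge0 hE x1)|apply: (nrm_ge0 hE x2)|apply: bnd1|apply: bnd2].
Qed.

Variables (U : nat -> V -> Prop) (c : V') (f : V -> V').
Hypotheses (hc : forall m, lvl F m c) (hU : forall m x, U m x -> lvl E m x)
  (hf : forall x, f x = c + T x).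

Lemma affine_sc0 : sc0 E F U f.
Proof.
case: hT => lin [lv bnd]; split=> [m x /hU x_m|m x /hU x_m e e_gt0].
  by rewrite hf; apply: lvlD => //; apply: lv.
have [b bnd_b] := bnd m; have [d d_gt0 small] := bounded_small b e_gt0.
exists d; split=> // y /hU y_m yx_lt; have yx_m := lvlB hE y_m x_m.
rewrite !hf opprD addrACA subrr add0r -(linear_lvl0B lin (lvlW hE y_m) (lvlW hE x_m)).
exact: le_lt_trans (bnd_b _ yx_m) (small _ (nrm_ge0 hE yx_m) yx_lt).
Qed.

Lemma affine_scderiv x : lvl E 0 x -> is_scderiv E F U f x T.
Proof.
move=> x0; split=> [|e e_gt0]; first exact: sc_operator_bounded_linear0.
exists 1; split=> // h h1 _ _; have h0 := lvlW hE h1.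
rewrite !hf (linear_lvl0D hT.1) // addrA [_ + T h]addrC addrK subrr.
by rewrite nrm0 // mulr_ge0 ?nrm_ge0 // ltW.
Qed.

End ScOperator.

Lemma sc_operator_ext (V V' : lmodType R) (E : scSpace V) (F : scSpace V')
    (T1 T2 : V -> V') :
  sc_normed E -> sc_operator E F T1 -> (forall x, lvl E 0 x -> T2 x = T1 x) ->
  sc_operator E F T2.
Proof.
move=> hE [lin [lv bnd]] T21; split=> [a x y x0 y0|].
  by have axy := lvlZD hE a x0 y0; rewrite !T21 //; apply: lin.
split=> [m x x_m|m]; first by have x0 := lvlW hE x_m; rewrite T21 //; apply: lv.
have [c bnd_c] := bnd m; exists c => x x_m.
by have x0 := lvlW hE x_m; rewrite T21 //; apply: bnd_c.
Qed.

(* [f] is only pointwise equal to [c + T]: the tangent map of [c + T] is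
   [(c, 0) + (T, T)] only up to [0 + _], and the induction must absorb that. *)
Lemma affine_scK k : forall (V V' : lmodType R) (E : scSpace V) (F : scSpace V')
    (T : V -> V') (U : nat -> V -> Prop) (c : V') (f : V -> V'),
  sc_normed E -> sc_normed F -> sc_operator E F T ->
  (forall m, lvl F m c) -> (forall m x, U m x -> lvl E m x) ->
  (forall x, f x = c + T x) -> scK k E F U f.
Proof.
elim: k => [|k IH] V V' E F T U c f hE hF hT hc hU hf.
  exact: (affine_sc0 hE hF hT hc hU hf).
split; first exact: (affine_sc0 hE hF hT hc hU hf).
exists (fun _ => T); split.
  by move=> x /hU /(lvlW hE) x0; apply: affine_scderiv.
apply: (IH _ _ _ _ (fun p => (T p.1, T p.2)) _ (c, 0)).
- exact: sc_normed_tan.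
- exact: sc_normed_tan.
- exact: (sc_operator_tan hE hT).
- by move=> m; split; [apply: hc|apply: lvl0].
- by move=> m x [/hU x1 x2].
- by move=> p; change ((f p.1, T p.2) = (c + T p.1, 0 + T p.2)); rewrite hf add0r.
Qed.

Lemma affine_sc_plus (V V' : lmodType R) (E : scSpace V) (F : scSpace V')
    (T : V -> V') (U : nat -> V -> Prop) (c : V') :
  sc_normed E -> sc_normed F -> sc_operator E F T -> sc_operator E (sc_shift F) T ->
  (forall m, lvl F m c) -> (forall m x, U m x -> lvl E m x) ->
  sc_plus E F U (fun x => c + T x).
Proof.
move=> hE hF hT hT1 hc hU; split=> [k|]; first exact: (affine_scK k hE hF hT hc hU).
split=> [m x /hU x_m|k].
  by apply: (lvlD hF (hc m.+1)); case: hT1 => _ [lv _]; apply: lv x_m.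
exact: (affine_scK k hE (sc_normed_shift hF) hT1 (fun m => hc m.+1) hU).
Qed.

Lemma bounded_linear0B (V V' : lmodType R) (E : scSpace V) (F : scSpace V')
    (L1 L2 : V -> V') :
  sc_normed E -> sc_normed F -> bounded_linear0 E F L1 -> bounded_linear0 E F L2 ->
  bounded_linear0 E F (fun x => L1 x - L2 x).
Proof.
move=> hE hF [lv1 [lin1 [c1 bnd1]]] [lv2 [lin2 [c2 bnd2]]].
split=> [x x0|]; first exact: lvlB (lv1 _ x0) (lv2 _ x0).
split=> [a x y x0 y0|]; first by rewrite lin1 // lin2 // scalerBr opprD addrACA.
exists ((`|c1| + `|c2|) * 2) => x x0; have x_ge0 := nrm_ge0 hE x0.
apply: le_trans (nrmD hF (lv1 _ x0) (lvlN hF (lv2 _ x0))) _.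
rewrite (nrmN hF (lv2 _ x0)) -mulrA mulr_natl mulr2n.
exact: ler_add_bound (bnd1 _ x0) (bnd2 _ x0).
Qed.

Lemma scderiv_sc_operator (V V' : lmodType R) (E : scSpace V) (F : scSpace V')
    (U : nat -> V -> Prop) (g : V -> V') (L : V -> V -> V') x :
  sc_normed E -> sc_normed F -> (forall m, U m x) ->
  is_scderiv E F U g x (L x) ->
  sc0 (tan_space E) (tan_space F) (tan_germ E U) (tan_map g L) ->
  sc_operator E F (L x).
Proof.
move=> hE hF Ux [[_ [lin _]] _] [tan_lv tan_cont].
have lv m v : lvl E m v -> lvl F m (L x v).
  by move=> v_m; have [] := tan_lv m (x, v) (conj (Ux m.+1) v_m).
split=> //; split=> // m.
(* Continuity of the tangent map at (x, 0) bounds L x on a ball of E_m. *)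
have [d [d_gt0 near]] := tan_cont m (x, 0) (conj (Ux m.+1) (lvl0 hE m)) 1 ltr01.
exists (2 / d) => v v_m.
have L0 : L x 0 = 0 := linear_lvl0_0 hE lin.
have [v0|v_neq0] := eqVneq (nrm E m v) 0.
  by rewrite (nrm_le0 hE v_m) ?v0 // L0 nrm0 // nrm0 // mulr0.
have v_gt0 : 0 < nrm E m v by rewrite lt0r v_neq0 nrm_ge0.
pose t := d / (2 * nrm E m v).
have t_gt0 : 0 < t by rewrite divr_gt0 // mulr_gt0.
have tv : t * nrm E m v = d / 2.
  by rewrite /t mulrAC -mulf_div divff ?mulr1 // lt0r_neq0.
have tv_m : lvl E m (t *: v) := lvlZ hE t v_m.
have near_tv := near (x, t *: v) (conj (Ux m.+1) tv_m).
change (nrm E m.+1 (x - x) + nrm E m (t *: v - 0) < d ->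
  nrm F m.+1 (g x - g x) + nrm F m (L x (t *: v) - L x 0) < 1) in near_tv.
move: near_tv; rewrite L0 !subrr !subr0 !nrm0 // !add0r nrmZ // gtr0_norm // tv.
rewrite (linear_lvl0Z hE _ lin (lvlW hE v_m)) (nrmZ hF _ (lv _ _ v_m)) gtr0_norm //.
have half_d : d / 2 < d by lra.
move=> /(_ half_d) tLv; rewrite -(ler_pM2l t_gt0) mulrCA tv.
have -> : 2 / d * (d / 2) = 1 by field; rewrite lt0r_neq0.
exact: ltW.
Qed.

(** * Derivatives at a point *)

Lemma bounded_linear0_eq0 (V V' : lmodType R) (E : scSpace V) (F : scSpace V')
    (M : V -> V') :
  sc_normed E -> sc_normed F -> lvl1_dense E -> bounded_linear0 E F M ->
  (forall x, lvl E 1 x -> M x = 0) -> forall x, lvl E 0 x -> M x = 0.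
Proof.
move=> hE hF dense [lv [lin [c bnd]]] M1 x x0.
apply: (nrm_le0 hF (lv _ x0)); apply: (@le0_of_small _ `|c|) => d /andP[d_gt0 _].
have [y [y1 xy]] := dense x x0 d d_gt0.
have y0 := lvlW hE y1; have xy0 := lvlB hE x0 y0.
have -> : M x = M (x - y) by rewrite (linear_lvl0B lin) // (M1 _ y1) subr0.
apply: le_trans (bnd _ xy0) _; have := nrm_ge0 hE xy0.
have := ler_norm c; have := normr_ge0 c; move: xy; set B := `|c|; nra.
Qed.

Lemma germ_nbhd_ball (V : lmodType R) (E : scSpace V) C U m :
  is_germ_nbhd E C U ->
  exists2 d : R, 0 < d & forall y, C y -> lvl E m y -> nrm E m y < d -> U m y.
Proof.
case=> _ [_ [U0 open]]; have [d [d_gt0 ball]] := open m 0 (U0 m).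
by exists d => // y Cy y_m yd; apply: ball => //; rewrite subr0.
Qed.

Lemma is_germ_nbhd_meet (V : lmodType R) (E : scSpace V) C (U1 U2 : nat -> V -> Prop) :
  is_germ_nbhd E C U1 -> is_germ_nbhd E C U2 ->
  is_germ_nbhd E C (fun m x => U1 m x /\ U2 m x).
Proof.
move=> [dec1 [sub1 [zero1 open1]]] [dec2 [_ [zero2 open2]]].
split=> [m x [/dec1 ? /dec2 ?]//|]; split=> [m x [/sub1 //]|]; split=> // m x [x1 x2].
have [d1 [d1_gt0 ball1]] := open1 m x x1; have [d2 [d2_gt0 ball2]] := open2 m x x2.
exists (Order.min d1 d2); split=> [|y Cy y_m]; first by rewrite lt_min d1_gt0.
by rewrite lt_min => /andP[yd1 yd2]; split; [apply: ball1|apply: ball2].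
Qed.

Section DerivativeOnCone.
Variables (V V' : lmodType R) (E : scSpace V) (F : scSpace V').
Hypotheses (hE : sc_normed E) (hF : sc_normed F).
Variables (C : V -> Prop) (U : nat -> V -> Prop) (G : V -> V').
Hypotheses (C0 : C 0) (C_cone : forall t y, 0 < t -> C y -> C (t *: y)).
Hypothesis U_ball : exists2 d : R, 0 < d &
  forall y, C y -> lvl E 1 y -> nrm E 1 y < d -> U 1 y.

Lemma scderiv_ray L h : is_scderiv E F U G 0 L -> C h -> lvl E 1 h ->
  forall r, 0 < r -> exists2 d : R, 0 < d & forall t, 0 < t < d ->
    U 1 (t *: h) /\ nrm F 0 (G (t *: h) - G 0 - t *: L h) <= r * (t * nrm E 1 h).
Proof.
move=> [[_ [lin _]] est] Ch h1 r r_gt0.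
have [d1 [d1_gt0 near]] := est r r_gt0; have [d2 d2_gt0 ball] := U_ball.
have h_ge0 := nrm_ge0 hE h1.
exists (Order.min d1 d2 / (nrm E 1 h + 1)).
  by rewrite divr_gt0 ?lt_min ?d1_gt0 //; lra.
move=> t /andP[t_gt0]; rewrite ltr_pdivlMr; last lra.
rewrite lt_min => /andP[td1 td2]; have th1 := lvlZ hE t h1.
have th_lt : nrm E 1 (t *: h) < Order.min d1 d2.
  by rewrite nrmZ // gtr0_norm // lt_min; apply/andP; split; nra.
move: th_lt; rewrite lt_min => /andP[th_d1 th_d2].
have Uth : U 1 (t *: h) by apply: ball => //; apply: C_cone.
split=> //; have := near _ th1; rewrite add0r => /(_ Uth th_d1).
by rewrite (linear_lvl0Z hE _ lin (lvlW hE h1)) nrmZ // gtr0_norm.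
Qed.

Hypothesis G_lvl : forall y, U 1 y -> lvl F 0 (G y).

Lemma scderiv_unique_cone L1 L2 :
  is_scderiv E F U G 0 L1 -> is_scderiv E F U G 0 L2 ->
  forall h, C h -> lvl E 1 h -> L1 h = L2 h.
Proof.
move=> dL1 dL2 h Ch h1; have h0 := lvlW hE h1.
have [[lv1 _] _] := dL1; have [[lv2 _] _] := dL2.
apply/eqP; rewrite -subr_eq0; apply/eqP.
have Lh0 := lvlB hF (lv1 _ h0) (lv2 _ h0).
apply: (nrm_le0 hF Lh0); apply: (@le0_of_small _ (2 * nrm E 1 h)) => r /andP[r_gt0 _].
have [d1 d1_gt0 ray1] := scderiv_ray dL1 Ch h1 r_gt0.
have [d2 d2_gt0 ray2] := scderiv_ray dL2 Ch h1 r_gt0.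
have [t [t_gt0 td1]] := small_scale d1_gt0 d2_gt0 ler01; rewrite mulr1 => td2.
have [Uth est1] := ray1 t (introT andP (conj t_gt0 td1)).
have [_ est2] := ray2 t (introT andP (conj t_gt0 td2)).
have [d3 d3_gt0 ball] := U_ball.
have G0 : lvl F 0 (G 0) by apply/G_lvl/ball => //; [apply: lvl0 | rewrite nrm0].
have dG := lvlB hF (G_lvl Uth) G0.
have A0 := lvlB hF dG (lvlZ hF t (lv1 _ h0)).
have B0 := lvlB hF dG (lvlZ hF t (lv2 _ h0)).
have : t *: (L1 h - L2 h) =
    (G (t *: h) - G 0 - t *: L2 h) - (G (t *: h) - G 0 - t *: L1 h).
  by rewrite scalerBr opprB [RHS]addrC addrA subrK.
move=> /(congr1 (nrm F 0)); rewrite nrmZ // gtr0_norm // => tL.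
have := nrmD hF B0 (lvlN hF A0); rewrite nrmN // -tL => tri.
rewrite -(ler_pM2l t_gt0); nra.
Qed.

End DerivativeOnCone.

Lemma scderiv_sub_affine (V V' : lmodType R) (E : scSpace V) (F : scSpace V')
    (U U' : nat -> V -> Prop) (g : V -> V') (c : V') (T D D' : V -> V') x :
  sc_normed E -> (forall y, U' 1 y -> U 1 y) -> linear_lvl0 E T ->
  bounded_linear0 E F D' -> (forall h, lvl E 0 h -> D h = T h + D' h) ->
  lvl E 0 x -> is_scderiv E F U g x D ->
  is_scderiv E F U' (fun y => g y - (c + T y)) x D'.
Proof.
move=> hE U'U lin bD' DT x0 [_ est]; split=> // e e_gt0.
have [d [d_gt0 near]] := est e e_gt0; exists d; split=> // h h1 Uxh hd.
have h0 := lvlW hE h1.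
have -> : g (x + h) - (c + T (x + h)) - (g x - (c + T x)) - D' h = g (x + h) - g x - D h.
  rewrite (linear_lvl0D lin) // DT // opprB [c + (T x + T h)]addrA opprD.
  rewrite [g (x + h) + _]addrA [_ + (c + T x - g x)]addrA (addrAC _ (- T h)) subrK.
  by rewrite opprD addrA (addrAC (g (x + h))).
exact: near h h1 (U'U _ Uxh) hd.
Qed.

Lemma sc_splitting_sym (V : lmodType R) (E : scSpace V) (A B : V -> Prop) :
  sc_normed E -> sc_splitting E A B -> sc_splitting E B A.
Proof.
move=> hE [sA [sB [A0 [B0 [cA [cB [AB [dec bnd]]]]]]]].
do 6!(split; first by []).
split=> [x Bx Ax|]; first exact: AB.
split=> [m x x_m|m].
  by have [a [b [Aa [Bb [a_m [b_m ->]]]]]] := dec m x x_m; exists b, a; rewrite addrC.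
have [c bnd_c] := bnd m; exists (1 + c) => b a Bb Aa b_m a_m.
have ab_m := lvlD hE a_m b_m; have := bnd_c a b Aa Bb a_m b_m.
have := nrmD hE ab_m (lvlN hE a_m); rewrite nrmN // addrC addKr [b + a]addrC mulrDl mul1r.
lra.
Qed.

(** * The sc-space R^p ⊕ W *)

Lemma quadrant0 k n : quadrant k (0 : 'rV[R]_n).
Proof. by move=> i _; rewrite mxE. Qed.

Lemma quadrantZ k n t (v : 'rV[R]_n) : 0 <= t -> quadrant k v -> quadrant k (t *: v).
Proof. by move=> t_ge0 qv i ik; rewrite mxE mulr_ge0 // qv. Qed.

Lemma quadrant_decomp k n (v : 'rV[R]_n) :
  exists vp vm, [/\ quadrant k vp, quadrant k vm & v = vp - vm].
Proof.
exists (\row_i ((`|v ord0 i| + v ord0 i) / 2)), (\row_i ((`|v ord0 i| - v ord0 i) / 2)).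
split; [move=> i _| move=> i _|]; rewrite ?mxE.
- by have := ler_norm (- v ord0 i); rewrite normrN; lra.
- by have := ler_norm (v ord0 i); lra.
by apply/rowP => i; rewrite !mxE; lra.
Qed.

Section FiniteSum.
Variables (W : lmodType R) (EW : scSpace W).
Hypothesis hW : sc_normed EW.

Lemma sc_normed_sum_fin p : sc_normed (sc_sum (sc_fin p) EW).
Proof. by apply: sc_normed_sum => //; apply: sc_normed_fin. Qed.

Lemma nrm_pair0l p m (w : W) :
  nrm (sc_sum (sc_fin p) EW) m (0, w) = nrm EW m w.
Proof. by rewrite -[RHS]add0r -(nrm0 (sc_normed_fin p) m). Qed.

Lemma nrm_pair0r p m (v : 'rV[R]_p) :
  nrm (sc_sum (sc_fin p) EW) m (v, 0) = nrm (sc_fin p) m v.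
Proof. by rewrite -[RHS]addr0 -(nrm0 hW m). Qed.

Lemma nrm_snd_le p m (x : 'rV[R]_p * W) :
  nrm EW m x.2 <= nrm (sc_sum (sc_fin p) EW) m x.
Proof. by rewrite lerDr; apply: (nrm_ge0 (sc_normed_fin p) (m := m)). Qed.

Lemma nrm_fst_le p m (x : 'rV[R]_p * W) : lvl EW m x.2 ->
  nrm (sc_fin p) m x.1 <= nrm (sc_sum (sc_fin p) EW) m x.
Proof. by move=> x2; rewrite lerDl; apply: nrm_ge0 x2. Qed.

Lemma scale_pair0l p t (w : W) : t *: ((0, w) : 'rV[R]_p * W) = (0, t *: w).
Proof. by change ((t *: (0 : 'rV[R]_p), t *: w) = (0, t *: w)); rewrite scaler0. Qed.

Lemma pair_scaleD0 p a (v v' : 'rV[R]_p) :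
  ((a *: v + v', 0) : 'rV[R]_p * W) = a *: (v, 0) + (v', 0).
Proof. by change ((a *: v + v', 0) = (a *: v + v', a *: (0 : W) + 0)); rewrite scaler0 addr0. Qed.

Lemma pair0_scaleD p a (w w' : W) :
  ((0, a *: w + w') : 'rV[R]_p * W) = a *: (0, w) + (0, w').
Proof.
by change ((0, a *: w + w') = (a *: (0 : 'rV[R]_p) + 0, a *: w + w')); rewrite scaler0 addr0.
Qed.

Lemma lvl1_dense_sum_fin p : lvl1_dense EW -> lvl1_dense (sc_sum (sc_fin p) EW).
Proof.
move=> dense [v w] [_ w0] e e_gt0; have [y [y1 wy]] := dense w w0 e e_gt0.
exists (v, y); split=> //.
change (nrm (sc_fin p) 0 (v - v) + nrm EW 0 (w - y) < e).
by rewrite subrr (nrm0 (sc_normed_fin p)) add0r.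
Qed.

Definition fin_factor p : 'rV[R]_p * W -> Prop := fun x => x.2 = 0.
Definition sc_factor p : 'rV[R]_p * W -> Prop := fun x => x.1 = 0 /\ lvl EW 0 x.2.

Lemma has_dim_fin_factor p : has_dim (@fin_factor p) p.
Proof.
have fst_sum (c : 'I_p -> R) : (\sum_(i < p) c i *: (('e_i, 0) : 'rV[R]_p * W)).1
    = \sum_(i < p) c i *: 'e_i.
  by rewrite (big_morph fst (fun x y => erefl) erefl).
have snd_sum (c : 'I_p -> R) : (\sum_(i < p) c i *: (('e_i, 0) : 'rV[R]_p * W)).2 = 0.
  by rewrite (big_morph snd (fun x y => erefl) erefl) big1 // => i _; apply: scaler0.
exists (fun i => ('e_i, 0)); split=> [[v w]|c c0 i].
  split=> [w0|[c ->]]; last exact: snd_sum.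
  exists (fun i => v ord0 i); move: (fst_sum (fun i => v ord0 i)) (snd_sum (fun i => v ord0 i)).
  case: (\sum_(i < p) _) => a b /= -> ->.
  by rewrite -row_sum_delta; congr pair; rewrite -w0.
have row_c : \row_j c j = \sum_(j < p) c j *: 'e_j.
  by rewrite [LHS]row_sum_delta; apply: eq_bigr => j _; rewrite mxE.
have := fst_sum c; rewrite c0 -row_c => /(congr1 (fun v : 'rV[R]_p => v ord0 i)).
by rewrite !mxE.
Qed.

Lemma closed_fin_factor p : closed_in (sc_sum (sc_fin p) EW) 0 (@fin_factor p).
Proof.
move=> u x u2 [_ x2] ux; apply: (nrm_le0 hW x2); apply: (@le0_of_small _ 1) => e.
case/andP=> e_gt0 _; have [i0 near] := ux e e_gt0.
have le : nrm EW 0 ((u i0).2 - x.2) <= nrm (sc_sum (sc_fin p) EW) 0 (u i0 - x)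
  := nrm_snd_le 0 (u i0 - x).
rewrite (u2 i0 : (u i0).2 = 0) sub0r nrmN // in le.
by rewrite mul1r; apply: ltW (le_lt_trans le (near _ (leqnn _))).
Qed.

Lemma closed_sc_factor p : closed_in (sc_sum (sc_fin p) EW) 0 (@sc_factor p).
Proof.
move=> u x ux0 [_ x2] ux; split=> //.
apply: (nrm_le0 (sc_normed_fin p) (I : lvl (sc_fin p) 0 x.1)).
apply: (@le0_of_small _ 1) => e /andP[e_gt0 _]; have [i0 near] := ux e e_gt0.
have [u1 u2] := ux0 i0.
have le : nrm (sc_fin p) 0 ((u i0).1 - x.1) <= nrm (sc_sum (sc_fin p) EW) 0 (u i0 - x)
  := nrm_fst_le (lvlB hW u2 x2 : lvl EW 0 (u i0 - x).2).
rewrite u1 sub0r (nrmN (sc_normed_fin p)) // in le.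
by rewrite mul1r; apply: ltW (le_lt_trans le (near _ (leqnn _))).
Qed.

Lemma sc_splitting_fin_factor p :
  sc_splitting (sc_sum (sc_fin p) EW) (@fin_factor p) (@sc_factor p).
Proof.
split.
  split=> [|a x y x0 y0] //.
  by change (a *: x.2 + y.2 = 0); rewrite x0 y0 scaler0 addr0.
split.
  split=> [|a x y [x1 x2] [y1 y2]]; first by split=> //; apply: lvl0.
  split; last exact: (lvlZD hW a x2 y2).
  by change (a *: x.1 + y.1 = 0); rewrite x1 y1 scaler0 addr0.
split; first by move=> x x2; split=> //; rewrite x2; apply: lvl0.
split; first by move=> x [_ x2].
split; first exact: closed_fin_factor.
split; first exact: closed_sc_factor.
split; first by move=> [v w] w0 [v0 _]; rewrite /fin_factor /= in w0 v0; rewrite v0 w0.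
split=> [m [v w] [_ w_m]|m].
  exists (v, 0), (0, w); split=> //; split; first by split=> //; apply: lvlW w_m.
  split; first by split=> //; apply: lvl0.
  split; first by split.
  by change ((v, w) = (v + 0, 0 + w)); rewrite addr0 add0r.
exists 1 => -[a1 a2] [b1 b2] a0 [b0 _] _ [_ b_m].
rewrite /fin_factor /= in a0; rewrite /= in b0 b_m; rewrite a0 b0.
change (nrm (sc_fin p) m a1 + nrm EW m 0
  <= 1 * (nrm (sc_fin p) m (a1 + 0) + nrm EW m (0 + b2))).
by rewrite addr0 add0r nrm0 // addr0 mul1r lerDl; apply: nrm_ge0 b_m.
Qed.

Lemma snd_sc_operator n N :
  sc_operator (sc_sum (sc_fin n) EW) (sc_sum (sc_fin N) EW)
    (fun x : 'rV[R]_n * W => ((0 : 'rV[R]_N), x.2)).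
Proof.
split=> [a x y _ _|]; first exact: (pair0_scaleD N a x.2 y.2).
split=> [m x [_ x2]|m]; first by split.
by exists 1 => x x_m; rewrite nrm_pair0l mul1r; apply: nrm_snd_le.
Qed.

Lemma sc_fredholm_snd n N (L : 'rV[R]_n * W -> 'rV[R]_N * W) :
  (forall x, lvl (sc_sum (sc_fin n) EW) 0 x -> L x = (0, x.2)) ->
  sc_fredholm (sc_sum (sc_fin n) EW) (sc_sum (sc_fin N) EW) L n N.
Proof.
move=> hL; have hEn := sc_normed_sum_fin n.
split; first exact: sc_operator_ext hEn (snd_sc_operator n N) hL.
exists (@fin_factor n), (@sc_factor n), (@sc_factor N), (@fin_factor N).
split.
  move=> x; split=> [x2|[x0 Lx]].
    have x0 : lvl (sc_sum (sc_fin n) EW) 0 x.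
      by split=> //; rewrite (x2 : x.2 = 0); apply: lvl0.
    by split=> //; rewrite hL // (x2 : x.2 = 0).
  by move: Lx; rewrite hL // => /(congr1 snd).
split; first exact: has_dim_fin_factor.
split; first exact: has_dim_fin_factor.
split; first exact: sc_splitting_fin_factor.
split; first exact: (sc_splitting_sym (sc_normed_sum_fin N) (sc_splitting_fin_factor N)).
split.
  move=> [v w]; split=> [[/= v0 w0]|[x [[x1 x2] ->]]].
    by exists (0, w); split=> //; rewrite hL ?v0 //; split.
  by rewrite hL //; split.
split.
  move=> [v w] [v' w'] [/= v0 w0] [/= v'0 w'0].
  rewrite !hL; [|by split|by split] => /(congr1 snd) /= ww'.
  by rewrite v0 v'0 ww'.
split.
  move=> m [v w] [/= v0 w0] [_ w_m]; exists (0, w); split=> //.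
  by split; [split | rewrite hL ?v0 //; split].
move=> m; exists 1 => -[v w] [/= v0 w0] x_m.
rewrite hL ?mul1r; last by split.
change (nrm (sc_fin n) m v + nrm EW m w <= nrm (sc_fin N) m 0 + nrm EW m w).
by rewrite v0 !(nrm0 (sc_normed_fin _)).
Qed.

End FiniteSum.

(** * Germs on the partial quadrant *)

Section QuadrantGerm.
Variables (W : lmodType R) (EW : scSpace W) (k n N : nat).
Hypothesis hW : sc_normed EW.
Local Notation En := (sc_sum (sc_fin n) EW).
Local Notation FN := (sc_sum (sc_fin N) EW).
Variables (U : nat -> 'rV[R]_n * W -> Prop) (G : 'rV[R]_n * W -> 'rV[R]_N * W).
Hypotheses (hU : is_germ_nbhd En (fun p => quadrant k p.1) U)
  (G_lvl : forall y, U 1 y -> lvl FN 0 (G y)).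

Let hEn := sc_normed_sum_fin hW n.
Let hFN := sc_normed_sum_fin hW N.
Let C0 : quadrant k (0 : 'rV[R]_n * W).1 := @quadrant0 k n.
Let C_cone t (y : 'rV[R]_n * W) : 0 < t -> quadrant k y.1 -> quadrant k (t *: y).1.
Proof. by move=> t_gt0; apply: quadrantZ; apply: ltW. Qed.
Let U_ball := germ_nbhd_ball 1 hU.

Lemma contraction_ray :
  sc0_contraction EW U (fun p => (G p - G 0).2) -> forall r, 0 < r < 1 ->
  exists2 d : R, 0 < d & forall w, U 0 (0, w) -> nrm EW 0 w < d ->
    nrm EW 0 (w - (G (0, w) - G 0).2) <= r * nrm EW 0 w.
Proof.
move=> [_ [f0 contr]] r r01; have [d [d_gt0 near]] := contr 0%N r r01.
exists d => // w Uw wd; have [_ [_ [U0 _]]] := hU.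
have := near 0 w 0 Uw (U0 0%N); rewrite (nrm0 (sc_normed_fin n)) (nrm0 hW) subr0.
move=> /(_ d_gt0 wd d_gt0).
have -> : ((0, 0) : 'rV[R]_n * W).2 - (G (0, 0) - G 0).2 = 0.
  by change ((0 : W) - (G 0 - G 0).2 = 0); rewrite f0 subr0.
by rewrite subr0.
Qed.

Lemma contraction_snd_small L :
  sc0_contraction EW U (fun p => (G p - G 0).2) -> is_scderiv En FN U G 0 L ->
  forall w, lvl EW 1 w -> forall r, 0 < r < 1 ->
  nrm EW 0 (w - (L (0, w)).2) <= (nrm EW 0 w + nrm EW 1 w) * r.
Proof.
move=> contr dL w w1 r r01; have w0 := lvlW hW w1.
have [[Llv _] _] := dL; have Lw0 := Llv (0, w) (conj I w0).
have Cw : quadrant k ((0, w) : 'rV[R]_n * W).1 := @quadrant0 k n.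
have [d1 d1_gt0 ray] :=
  scderiv_ray hEn C_cone U_ball dL Cw (conj I w1 : lvl En 1 (0, w)) (proj1 (andP r01)).
have [d2 d2_gt0 near] := contraction_ray contr r01.
have [t [t_gt0 t_d1 t_d2]] := small_scale d1_gt0 d2_gt0 (nrm_ge0 hW w0).
have [Uth est] := ray t (introT andP (conj t_gt0 t_d1)).
rewrite scale_pair0l nrm_pair0l in Uth est.
have [U_dec [_ [U0 _]]] := hU.
have := near (t *: w) (U_dec _ _ Uth); rewrite nrmZ // gtr0_norm // => /(_ t_d2) cont.
set X := G (0, t *: w) - G 0 in cont est.
have X0 : lvl FN 0 X := lvlB hFN (G_lvl Uth) (G_lvl (U0 1%N)).
have A0 : lvl EW 0 (t *: w - X.2) := lvlB hW (lvlZ hW t w0) (proj2 X0).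
have B0 : lvl FN 0 (X - t *: L (0, w)) := lvlB hFN X0 (lvlZ hFN t Lw0).
have ell_split : t *: (w - (L (0, w)).2) = (t *: w - X.2) + (X - t *: L (0, w)).2.
  change (t *: (w - (L (0, w)).2) = (t *: w - X.2) + (X.2 - t *: (L (0, w)).2)).
  by rewrite scalerBr addrA subrK.
(* The contraction bounds the first summand, the derivative estimate the second. *)
have tri := nrmD hW A0 (proj2 B0).
rewrite -ell_split (nrmZ hW _ (lvlB hW w0 (proj2 Lw0))) gtr0_norm // in tri.
have snd := nrm_snd_le EW 0 (X - t *: L (0, w)).
rewrite -(ler_pM2l t_gt0).
have -> : t * ((nrm EW 0 w + nrm EW 1 w) * r)
    = r * (t * nrm EW 0 w) + r * (t * nrm EW 1 w) by ring.
lra.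
Qed.

Lemma contraction_deriv_snd L : lvl1_dense EW ->
  sc0_contraction EW U (fun p => (G p - G 0).2) -> is_scderiv En FN U G 0 L ->
  forall w, lvl EW 0 w -> (L (0, w)).2 = w.
Proof.
move=> dense contr dL; have [[Llv [Llin [c Lbnd]]] _] := dL.
have Lw_lvl w : lvl EW 0 w -> lvl EW 0 (L (0, w)).2.
  by move=> w0; have [] := Llv (0, w) (conj I w0).
pose ell w := w - (L (0, w)).2.
have ell_bl : bounded_linear0 EW EW ell.
  split=> [w w0|]; first exact: (lvlB hW w0 (Lw_lvl w w0)).
  split=> [a w w' w0 w'0|].
    rewrite /ell pair0_scaleD Llin; try exact: (conj I _).
    change (a *: w + w' - (a *: (L (0, w)).2 + (L (0, w')).2)
      = a *: (w - (L (0, w)).2) + (w' - (L (0, w')).2)).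
    by rewrite scalerBr opprD addrACA.
  exists (1 + `|c|) => w w0; rewrite /ell.
  apply: le_trans (nrmD hW w0 (lvlN hW (Lw_lvl w w0))) _.
  rewrite (nrmN hW (Lw_lvl w w0)); have := nrm_snd_le EW 0 (L (0, w)).
  have := Lbnd (0, w) (conj I w0); rewrite nrm_pair0l.
  have := ler_norm c; have := nrm_ge0 hW w0; set B := `|c|; nra.
move=> w w0; apply/eqP; rewrite eq_sym -subr_eq0; apply/eqP.
apply: (bounded_linear0_eq0 hW hW dense ell_bl) => // v v1.
apply: (nrm_le0 hW (proj1 ell_bl _ (lvlW hW v1))).
apply: (@le0_of_small _ (nrm EW 0 v + nrm EW 1 v)) => r r01.
exact: contraction_snd_small.
Qed.

Lemma scderiv_unique_quadrant L1 L2 : lvl1_dense EW ->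
  is_scderiv En FN U G 0 L1 -> is_scderiv En FN U G 0 L2 ->
  forall x, lvl En 0 x -> L1 x = L2 x.
Proof.
move=> dense dL1 dL2 x x0; apply/eqP; rewrite -subr_eq0; apply/eqP; move: x x0.
have [bl1 _] := dL1; have [bl2 _] := dL2.
have blM := bounded_linear0B hEn hFN bl1 bl2.
apply: (bounded_linear0_eq0 hEn hFN (lvl1_dense_sum_fin (p := n) dense) blM) => -[v w] [_ w1].
have onC := scderiv_unique_cone hEn hFN C0 C_cone U_ball G_lvl dL1 dL2.
have [vp [vm [qp qm ->]]] := quadrant_decomp k v.
have -> : ((vp - vm, w) : 'rV[R]_n * W) = (vp, w) - (vm, 0).
  by change ((vp - vm, w) = (vp - vm, w - 0)); rewrite subr0.
have w0 := lvlW hW w1.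
rewrite (linear_lvl0B (proj1 (proj2 blM)) (conj I w0 : lvl En 0 (vp, w))
  (conj I (lvl0 hW 0) : lvl En 0 (vm, 0))).
rewrite (onC (vp, w) qp (conj I w1)) (onC (vm, 0) qm (conj I (lvl0 hW 1))).
by rewrite !subrr.
Qed.

End QuadrantGerm.

Section FinitePart.
Variables (W : lmodType R) (EW : scSpace W) (n N : nat).
Hypothesis hW : sc_normed EW.
Local Notation En := (sc_sum (sc_fin n) EW).
Local Notation FN := (sc_sum (sc_fin N) EW).
Variable D : 'rV[R]_n * W -> 'rV[R]_N * W.
Hypothesis hD : sc_operator En FN D.

Definition fin_part x : 'rV[R]_N * W := D (x.1, 0) + ((D (0, x.2)).1, 0).

Lemma fin_part_bounded j m : exists c : R, forall x, lvl En m x ->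
  lvl FN j (fin_part x) /\ nrm FN j (fin_part x) <= c * nrm En m x.
Proof.
have hFN := sc_normed_sum_fin hW N.
have [_ [lv bnd]] := hD; have [cj bnd_j] := bnd j; have [cm bnd_m] := bnd m.
exists (`|cj| + `|cm|) => -[v w] [_ w_m].
have v0_j : lvl En j (v, 0) by split=> //; apply: lvl0.
have Dv_j := lv _ _ v0_j; have Dw_m := lv _ _ (conj I w_m : lvl En m (0, w)).
have Dw1_j : lvl FN j ((D (0, w)).1, 0) by split=> //; apply: lvl0.
split; first exact: (lvlD hFN Dv_j Dw1_j).
apply: le_trans (nrmD hFN Dv_j Dw1_j) _.
change (nrm En m (v, w)) with (nrm (sc_fin n) m v + nrm EW m w).
apply: (ler_add_bound (nrm_ge0 (sc_normed_fin n) (I : lvl (sc_fin n) m v)) (nrm_ge0 hW w_m)).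
  by have := bnd_j _ v0_j; rewrite (nrm_pair0r hW).
rewrite (nrm_pair0r hW) -(nrm_pair0l EW n m w).
change (nrm (sc_fin N) m (D (0, w)).1 <= cm * nrm En m (0, w)).
exact: le_trans (nrm_fst_le hW (proj2 Dw_m)) (bnd_m (0, w) (conj I w_m)).
Qed.

Lemma fin_part_linear : linear_lvl0 En fin_part.
Proof.
have [lin _] := hD; move=> a [v w] [v' w'] [_ w0] [_ w'0]; rewrite /fin_part.
change (D (a *: v + v', 0) + ((D (0, a *: w + w')).1, 0)
  = a *: (D (v, 0) + ((D (0, w)).1, 0)) + (D (v', 0) + ((D (0, w')).1, 0))).
rewrite pair_scaleD0 pair0_scaleD !lin; try by split=> //; apply: lvl0.
change (a *: D (v, 0) + D (v', 0) + ((a *: D (0, w) + D (0, w')).1, 0)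
  = a *: (D (v, 0) + ((D (0, w)).1, 0)) + (D (v', 0) + ((D (0, w')).1, 0))).
by rewrite pair_scaleD0 scalerDr addrACA.
Qed.

Lemma fin_part_sc_operator : sc_operator En FN fin_part.
Proof.
split; first exact: fin_part_linear.
split=> [m x x_m|m]; first by have [c /(_ x x_m) []] := fin_part_bounded m m.
by have [c bnd] := fin_part_bounded m m; exists c => x /bnd [].
Qed.

Lemma fin_part_sc_operator_shift : sc_operator En (sc_shift FN) fin_part.
Proof.
split; first exact: fin_part_linear.
split=> [m x x_m|m]; first by have [c /(_ x x_m) []] := fin_part_bounded m.+1 m.
by have [c bnd] := fin_part_bounded m.+1 m; exists c => x /bnd [].
Qed.

Lemma fin_part_decomp : (forall w, lvl EW 0 w -> (D (0, w)).2 = w) ->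
  forall x, lvl En 0 x -> D x = fin_part x + (0, x.2).
Proof.
have [lin _] := hD; move=> Dsnd [v w] [_ w0]; rewrite /fin_part.
change (D (v, w) = D (v, 0) + ((D (0, w)).1, 0) + (0, w)).
have -> : ((v, w) : 'rV[R]_n * W) = (v, 0) + (0, w).
  by change ((v, w) = (v + 0, 0 + w)); rewrite addr0 add0r.
rewrite (linear_lvl0D lin); try by split=> //; apply: lvl0.
rewrite -addrA; congr (_ + _); move: (Dsnd w w0); case: (D (0, w)) => a b /= ->.
by change ((a, w) = (a + 0, 0 + w)); rewrite addr0 add0r.
Qed.
End FinitePart.

Theorem proposition3p5 (W : lmodType R) (EW : scSpace W) (k n N : nat)
  (U : nat -> ('rV[R]_n * W)%type -> Prop)
  (g : ('rV[R]_n * W)%type -> ('rV[R]_N * W)%type) :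
  is_scBanach EW ->
  (k <= n)%N ->
  is_germ_nbhd (sc_sum (sc_fin n) EW) (fun p => @quadrant k n p.1) U ->
  sc_smooth (sc_sum (sc_fin n) EW) (sc_sum (sc_fin N) EW) U g ->
  sc0_contraction EW U (fun p => (g p - g 0).2) ->
  lin_fredholm_index (sc_sum (sc_fin n) EW) (sc_sum (sc_fin N) EW)
    (fun p => @quadrant k n p.1) U g (n%:Z - N%:Z).
Proof.
move=> hB _ hU g_smooth contr.
have hW := scBanach_normed hB; have dense := scBanach_lvl1_dense hB.
have hEn := sc_normed_sum_fin hW n; have hFN := sc_normed_sum_fin hW N.
have [[g_lvl _] [L [dL tan]]] := g_smooth 1%N.
have [U_dec [U_sub [U0 _]]] := hU.
have U_lvl m x : U m x -> lvl (sc_sum (sc_fin n) EW) m x by case/U_sub.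
have G_lvl y : U 1 y -> lvl (sc_sum (sc_fin N) EW) 0 (g y).
  by move=> Uy; apply: g_lvl 0%N y (U_dec 0%N y Uy).
have dD := dL 0 (U0 1%N).
have hD := scderiv_sc_operator hEn hFN U0 dD tan.
have D_snd := contraction_deriv_snd hW hU G_lvl dense contr dD.
have s_plus := affine_sc_plus hEn hFN (fin_part_sc_operator hW hD)
  (fin_part_sc_operator_shift hW hD) (fun m => g_lvl m 0 (U0 m)) U_lvl.
exists U, (fun x => g 0 + fin_part (L 0) x); split=> //; split=> //.
split; first by rewrite (linear_lvl0_0 hEn (fin_part_linear hW hD)) addr0.
move=> U'; have hU' : is_germ_nbhd _ _ U' := is_germ_nbhd_meet hU hU.
have dsnd := scderiv_sub_affine (g 0) hEn (U' := U') (fun y Uy => proj1 Uy)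
  (fin_part_linear hW hD) (sc_operator_bounded_linear0 (snd_sc_operator EW n N))
  (fin_part_decomp hW hD D_snd) (lvl0 hEn 0) dD.
split; first by exists (fun x => (0, x.2)).
move=> L' dL'; exists n, N; split=> //; apply: sc_fredholm_snd => // x x0.
apply: (scderiv_unique_quadrant hW hU' _ dense dL' dsnd x0) => y [Uy _].
exact: (lvlB hFN (G_lvl y Uy) ((s_plus.1 0%N).1 0%N y (U_dec 0%N y Uy))).
Qed.
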